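(* Let $(X,d)$ be a complete metric space and $\{f_{\eta_k}:\eta_k\in B^{[k]},k\in\mathbb{N}\}$ a binary tree of continuous maps $X\to X$ sharing a common nonempty compact invariant set $C\subseteq X$ (i.e. $f_{\eta_k}(C)\subseteq C$ for all $\eta_k$), each $f_{\eta_k}$ Lipschitz with constant $s_{\eta_k}$. Assume there is a sequence $(\delta_k)$ with $\sum_{k=1}^\infty\delta_k<\infty$ such that $$\prod_{i=1}^k s_{\tau_i\eta}\le\delta_k\quad\text{for all }\eta\in B^{[\infty]},\ k\in\mathbb{N}.$$ Then for every $x\in C$, $$U_{TM}=\lim_{k\to\infty}\bigcup_{\eta\in B^{[\infty]}}f_{\tau_1\eta}\circ\cdots\circ f_{\tau_{k-1}\eta}\circ f_{\tau_k\eta}(x),$$ where the limit is taken in the Hausdorff metric $h$ on the nonempty compact subsets of $X$, and $U_{TM}=\bigcup_{\eta\in B^{[\infty]}}\gamma(\eta)$ with $\gamma(\eta)=\lim_{k\to\infty}f_{\tau_1\eta}\circ\cdots\circ f_{\tau_k\eta}(x)$.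
   Context: $B^{[k]}=\{1,2\}^k$, $B^{[\infty]}=\{1,2\}^{\mathbb{N}}$, and $\tau_\ell\eta$ denotes the first $\ell$ symbols of $\eta$. A binary tree of maps assigns to each finite code $\eta_k$ a continuous map $f_{\eta_k}:X\to X$. $h$ denotes the Hausdorff metric on the space $\mathbb{H}(X)$ of nonempty compact subsets of $X$. *)

From Stdlib Require Import Reals Lra List Classical ClassicalEpsilon.
Open Scope R_scope.

Record is_metric {X : Type} (d : X -> X -> R) : Prop := {
  md_nonneg : forall x y, 0 <= d x y;
  md_eq0    : forall x y, d x y = 0 <-> x = y;
  md_sym    : forall x y, d x y = d y x;
  md_tri    : forall x y z, d x z <= d x y + d y z }.

Definition converges {X : Type} (d : X -> X -> R) (u : nat -> X) (l : X) : Prop :=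
  forall eps, eps > 0 -> exists N, forall n, (n >= N)%nat -> d (u n) l < eps.

Definition cauchy {X : Type} (d : X -> X -> R) (u : nat -> X) : Prop :=
  forall eps, eps > 0 -> exists N, forall n m, (n >= N)%nat -> (m >= N)%nat ->
    d (u n) (u m) < eps.

Definition complete_metric {X : Type} (d : X -> X -> R) : Prop :=
  forall u, cauchy d u -> exists l, converges d u l.

Definition is_open {X : Type} (d : X -> X -> R) (O : X -> Prop) : Prop :=
  forall x, O x -> exists r, r > 0 /\ forall y, d x y < r -> O y.

Definition compact_set {X : Type} (d : X -> X -> R) (K : X -> Prop) : Prop :=
  forall (I : Type) (O : I -> X -> Prop),
    (forall i, is_open d (O i)) ->
    (forall x, K x -> exists i, O i x) ->
    exists l : list I, forall x, K x -> exists i, In i l /\ O i x.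

Definition continuous_map {X : Type} (d : X -> X -> R) (f : X -> X) : Prop :=
  forall x eps, eps > 0 -> exists delta, delta > 0 /\
    forall y, d x y < delta -> d (f x) (f y) < eps.

Definition lipschitz {X : Type} (d : X -> X -> R) (f : X -> X) (s : R) : Prop :=
  0 <= s /\ forall x y, d (f x) (f y) <= s * d x y.

(** Supremum / infimum of a set of reals (0 if no least upper bound exists). *)
Definition Rsup (E : R -> Prop) : R :=
  match excluded_middle_informative (exists m, is_lub E m) with
  | left H => proj1_sig (constructive_indefinite_description _ H)
  | right _ => 0
  end.
Definition Rinf (E : R -> Prop) : R := - Rsup (fun r => E (- r)).

Definition dist_pt_set {X : Type} (d : X -> X -> R) (x : X) (B : X -> Prop) : R :=
  Rinf (fun r => exists b, B b /\ r = d x b).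
Definition excess {X : Type} (d : X -> X -> R) (A B : X -> Prop) : R :=
  Rsup (fun r => exists a, A a /\ r = dist_pt_set d a B).
Definition hausdorff {X : Type} (d : X -> X -> R) (A B : X -> Prop) : R :=
  Rmax (excess d A B) (excess d B A).

(** Codes: symbols {1,2} are represented by bool; an infinite code is
    eta : nat -> bool, and tau k eta is the list of its first k symbols. *)
Definition tau (k : nat) (eta : nat -> bool) : list bool := map eta (seq 0 k).

(** tree_comp f eta k x = f_{tau_1 eta} o ... o f_{tau_k eta} (x). *)
Fixpoint tree_comp {X : Type} (f : list bool -> X -> X) (eta : nat -> bool) (k : nat) (x : X) : X :=
  match k with
  | O => x
  | S k' => tree_comp f eta k' (f (tau (S k') eta) x)
  end.

Fixpoint prefprod (s : list bool -> R) (eta : nat -> bool) (k : nat) : R :=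
  match k with
  | O => 1
  | S k' => prefprod s eta k' * s (tau (S k') eta)
  end.

From Stdlib Require Import Reals List Lra Lia Classical ClassicalEpsilon.
Open Scope R_scope.

(* Fix a starting point x in C and write u_eta(k) for the
   composition f_{tau_1 eta} o ... o f_{tau_k eta} (x).  Consecutive terms differ
   by (s_{tau_1 eta} ... s_{tau_k eta}) d(f_{tau_{k+1} eta}(x), x) <= diam(C) delta_k,
   and delta is summable, so the family (u_eta)_eta is Cauchy UNIFORMLY in eta.
   In a complete space each u_eta then converges to some gamma(eta), uniformly in
   eta; uniform convergence immediately bounds the Hausdorff distance between
   the k-th level set {u_eta(k)} and the attractor U = {gamma(eta)}.  Since u_eta(k)
   only depends on the first k symbols of eta, a Koenig-type argument on the binary
   tree of codes shows that U is compact. *)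

Section MetricSpace.

Variables (X : Type) (d : X -> X -> R).
Hypothesis Hm : is_metric d.

Lemma dist_self (x : X) : d x x = 0.
Proof. apply (md_eq0 _ Hm); reflexivity. Qed.

(* A compact set has bounded diameter: it is covered by finitely many unit balls. *)
Lemma compact_bounded (C : X -> Prop) (c : X) : compact_set d C -> C c ->
  exists D, 0 <= D /\ forall a b, C a -> C b -> d a b <= D.
Proof.
  intros Hc Hcc.
  destruct (Hc X (fun y z => d y z < 1)) as [l Hl].
  - intros y z Hz. exists (1 - d y z). split; [lra|]. intros w Hw.
    pose proof (md_tri _ Hm y z w). lra.
  - intros z _. exists z. rewrite dist_self. lra.
  - set (M := fold_right (fun y acc => Rmax (d c y) acc) 0 l).
    assert (HM : forall y, In y l -> d c y <= M).
    { subst M. clear. induction l as [|y0 l IHl]; simpl; intros y Hy; [contradiction|].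
      destruct Hy as [<-|Hy]; [apply Rmax_l|].
      eapply Rle_trans; [apply IHl; exact Hy | apply Rmax_r]. }
    assert (Hca : forall a, C a -> d c a <= M + 1).
    { intros a Ha. destruct (Hl a Ha) as [y [Hy Hya]].
      pose proof (md_tri _ Hm c y a). pose proof (HM y Hy). lra. }
    exists (2 * (M + 1)). split.
    + pose proof (Hca c Hcc). pose proof (md_nonneg _ Hm c c). lra.
    + intros a b Ha Hb. pose proof (md_tri _ Hm a c b). pose proof (md_sym _ Hm a c).
      pose proof (Hca a Ha); pose proof (Hca b Hb). lra.
Qed.

Lemma Rsup_le (E : R -> Prop) (M : R) : 0 <= M -> (forall r, E r -> r <= M) -> Rsup E <= M.
Proof.
  intros HM HE. unfold Rsup. destruct (excluded_middle_informative _) as [H|H]; [|lra].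
  destruct (constructive_indefinite_description _ H) as [m Hm']. simpl.
  apply (proj2 Hm'). exact HE.
Qed.

Lemma Rinf_le (E : R -> Prop) (a : R) : (forall r, E r -> 0 <= r) -> E a -> Rinf E <= a.
Proof.
  intros H0 Ha. unfold Rinf, Rsup. destruct (excluded_middle_informative _) as [H|H].
  - destruct (constructive_indefinite_description _ H) as [m Hm']. simpl.
    assert (-a <= m) by (apply (proj1 Hm'); rewrite Ropp_involutive; exact Ha). lra.
  - exfalso. apply H. destruct (completeness (fun r => E (- r))) as [m Hm'].
    + exists 0. intros r Hr. pose proof (H0 _ Hr). lra.
    + exists (- a). rewrite Ropp_involutive. exact Ha.
    + exists m; exact Hm'.
Qed.

Lemma dist_pt_set_le (B : X -> Prop) (a b : X) : B b -> dist_pt_set d a B <= d a b.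
Proof.
  intros Hb. apply Rinf_le.
  - intros r [b' [_ ->]]. apply (md_nonneg _ Hm).
  - exists b. split; auto.
Qed.

Lemma excess_le_matching (A B : X -> Prop) (r : R) : 0 <= r ->
  (forall a, A a -> exists b, B b /\ d a b <= r) -> excess d A B <= r.
Proof.
  intros Hr HAB. apply Rsup_le; [exact Hr|].
  intros q [a [Ha ->]]. destruct (HAB a Ha) as [b [Hb Hab]].
  eapply Rle_trans; [apply dist_pt_set_le; exact Hb | exact Hab].
Qed.

Lemma hausdorff_le_matching (A B : X -> Prop) (r : R) : 0 <= r ->
  (forall a, A a -> exists b, B b /\ d a b <= r) ->
  (forall b, B b -> exists a, A a /\ d a b <= r) -> hausdorff d A B <= r.
Proof.
  intros Hr HAB HBA. apply Rmax_lub; apply excess_le_matching; auto.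
  intros b Hb. destruct (HBA b Hb) as [a [Ha Hab]].
  exists a. rewrite (md_sym _ Hm). auto.
Qed.

Definition unif_cauchy {I : Type} (u : I -> nat -> X) : Prop :=
  forall eps, eps > 0 -> exists N, forall i n m, (n >= N)%nat -> (m >= N)%nat ->
    d (u i n) (u i m) < eps.

Lemma unif_cauchy_converges {I : Type} (u : I -> nat -> X) :
  complete_metric d -> unif_cauchy u -> forall i, exists y, converges d (u i) y.
Proof.
  intros Hcomplete Hu i. apply Hcomplete. intros eps Heps.
  destruct (Hu eps Heps) as [N HN]. exists N. intros n m Hn Hm'. apply HN; assumption.
Qed.

Lemma unif_cauchy_unif_limit {I : Type} (u : I -> nat -> X) : unif_cauchy u ->
  forall eps, eps > 0 -> exists N, forall i m y, (m >= N)%nat ->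
    converges d (u i) y -> d (u i m) y < eps.
Proof.
  intros Hu eps Heps. destruct (Hu (eps / 2)) as [N HN]; [lra|]. exists N.
  intros i m y Hm' Hy. destruct (Hy (eps / 2)) as [N1 HN1]; [lra|].
  pose proof (HN1 (Nat.max N N1) ltac:(lia)) as Hfar.
  pose proof (HN i m (Nat.max N N1) Hm' ltac:(lia)) as Hnear.
  pose proof (md_tri _ Hm (u i m) (u i (Nat.max N N1)) y). lra.
Qed.

Lemma telescope_bound (v : nat -> X) (a : nat -> R) (D : R) :
  (forall k, (k >= 1)%nat -> d (v (S k)) (v k) <= D * a k) ->
  forall m j, d (v (S (S m) + j)%nat) (v (S (S m))) <=
    D * (sum_f_R0 (fun i => a (S i)) (m + j) - sum_f_R0 (fun i => a (S i)) m).
Proof.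
  intros Hstep m j. induction j as [|j IHj].
  - rewrite !Nat.add_0_r, dist_self, Rminus_diag, Rmult_0_r. lra.
  - rewrite !Nat.add_succ_r, tech5.
    pose proof (Hstep (S (S m) + j)%nat ltac:(lia)) as Hlast.
    pose proof (md_tri _ Hm (v (S (S (S m) + j))) (v (S (S m) + j)%nat) (v (S (S m)))).
    replace (S (S m) + j)%nat with (S (S (m + j))) in * by lia.
    rewrite Rmult_minus_distr_l, Rmult_plus_distr_l. rewrite Rmult_minus_distr_l in IHj. lra.
Qed.

Lemma summable_steps_unif_cauchy {I : Type} (u : I -> nat -> X) (a : nat -> R) (D : R) :
  0 <= D -> Cauchy_crit (fun n => sum_f_R0 (fun i => a (S i)) n) ->
  (forall i k, (k >= 1)%nat -> d (u i (S k)) (u i k) <= D * a k) -> unif_cauchy u.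
Proof.
  intros HD Hsum Hstep eps Heps.
  set (e := eps / (2 * (D + 1))).
  assert (He : e > 0) by (unfold e; apply Rdiv_lt_0_compat; lra).
  assert (Heq : 2 * (D + 1) * e = eps) by (unfold e; field; lra).
  destruct (Hsum e He) as [N HN].
  assert (Hnear : forall i n, (n >= S (S N))%nat -> d (u i n) (u i (S (S N))) <= D * e).
  { intros i n Hn.
    replace n with (S (S N) + (n - S (S N)))%nat by lia.
    eapply Rle_trans; [apply telescope_bound; intros k Hk; apply Hstep; exact Hk|].
    apply Rmult_le_compat_l; [exact HD|].
    pose proof (HN (N + (n - S (S N)))%nat N ltac:(lia) ltac:(lia)) as Hdist.
    unfold Rdist in Hdist. pose proof (Rle_abs
      (sum_f_R0 (fun i => a (S i)) (N + (n - S (S N))) - sum_f_R0 (fun i => a (S i)) N)).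
    lra. }
  exists (S (S N)). intros i n m Hn Hm'.
  pose proof (Hnear i n Hn). pose proof (Hnear i m Hm').
  pose proof (md_tri _ Hm (u i n) (u i (S (S N))) (u i m)).
  pose proof (md_sym _ Hm (u i (S (S N))) (u i m)). nra.
Qed.

Definition agree (n : nat) (e1 e2 : nat -> bool) : Prop :=
  forall i, (i < n)%nat -> e1 i = e2 i.

Lemma infinite_branch (P : nat -> (nat -> bool) -> Prop) (e0 : nat -> bool) :
  P 0%nat e0 -> (forall n e, P n e -> exists e', agree n e e' /\ P (S n) e') ->
  exists eta, forall n, exists e, agree n eta e /\ P n e.
Proof.
  intros H0 Hext.
  destruct (choice (fun (ne : nat * (nat -> bool)) e' =>
    P (fst ne) (snd ne) -> agree (fst ne) (snd ne) e' /\ P (S (fst ne)) e')) as [g Hg].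
  { intros [n e]. destruct (classic (P n e)) as [Hp|Hp].
    - destruct (Hext n e Hp) as [e' He']. exists e'. intros _. exact He'.
    - exists e. intros Hp'. contradiction. }
  set (es := nat_rect (fun _ => nat -> bool) e0 (fun n e => g (n, e))).
  assert (Pes : forall n, P n (es n)).
  { induction n as [|n IHn]; [exact H0|]. exact (proj2 (Hg (n, es n) IHn)). }
  assert (Hmono : forall m p, agree m (es m) (es (m + p)%nat)).
  { intros m p. induction p as [|p IHp]; intros i Hi.
    - rewrite Nat.add_0_r. reflexivity.
    - rewrite (IHp i Hi), Nat.add_succ_r.
      apply (proj1 (Hg (m + p, es (m + p))%nat (Pes _))). simpl. lia. }
  exists (fun i => es (S i) i). intros n. exists (es n). split; [|apply Pes].
  intros i Hi. rewrite (Hmono (S i) (n - S i)%nat i ltac:(lia)). f_equal. lia.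
Qed.

Definition finitely_covered {I : Type} (O : I -> X -> Prop) (A : X -> Prop) : Prop :=
  exists l : list I, forall y, A y -> exists i, In i l /\ O i y.

Lemma finitely_covered_union {I : Type} (O : I -> X -> Prop) (A B1 B2 : X -> Prop) :
  (forall y, A y -> B1 y \/ B2 y) ->
  finitely_covered O B1 -> finitely_covered O B2 -> finitely_covered O A.
Proof.
  intros Hsplit [l1 H1] [l2 H2]. exists (l1 ++ l2). intros y Hy.
  destruct (Hsplit y Hy) as [Hy1|Hy2].
  - destruct (H1 y Hy1) as [i [Hi HO]]. exists i. split; [apply in_or_app; left|]; auto.
  - destruct (H2 y Hy2) as [i [Hi HO]]. exists i. split; [apply in_or_app; right|]; auto.
Qed.

Definition update (e : nat -> bool) (n : nat) (b : bool) : nat -> bool :=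
  fun i => if Nat.eqb i n then b else e i.

Lemma update_agree (e : nat -> bool) (n : nat) (b : bool) : agree n e (update e n b).
Proof.
  intros i Hi. unfold update. destruct (Nat.eqb_spec i n); [lia | reflexivity].
Qed.

Section CantorLimits.

Variable u : (nat -> bool) -> nat -> X.
Hypothesis prefix_determined : forall n e1 e2, agree n e1 e2 -> u e1 n = u e2 n.

Definition limits_from (n : nat) (e : nat -> bool) : X -> Prop :=
  fun y => exists e', agree n e e' /\ converges d (u e') y.

Lemma limits_from_split (n : nat) (e : nat -> bool) (y : X) : limits_from n e y ->
  limits_from (S n) (update e n true) y \/ limits_from (S n) (update e n false) y.
Proof.
  intros [e' [Hag Hy]].
  assert (Hext : agree (S n) (update e n (e' n)) e').
  { intros i Hi. unfold update. destruct (Nat.eqb_spec i n) as [->|Hne]; [reflexivity|].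
    apply Hag; lia. }
  destruct (e' n) eqn:Hbit; [left | right]; exists e'; split; assumption.
Qed.

Lemma limits_from_close (N : nat) (eps : R) (e : nat -> bool) (y : X) :
  (forall eta m z, (m >= N)%nat -> converges d (u eta) z -> d (u eta m) z < eps) ->
  limits_from N e y -> d (u e N) y < eps.
Proof.
  intros HN [e' [Hag Hy]]. rewrite (prefix_determined N e e' Hag). apply HN; auto.
Qed.

(* The limit set of a uniformly Cauchy family indexed by Cantor space is compact:
   an open cover without finite subcover would, by Koenig's lemma, have a branch
   eta all of whose prefix classes are not finitely covered, although the limit
   of u_eta lies in an open set containing all limits of a long prefix class. *)
Lemma limit_set_compact : complete_metric d -> unif_cauchy u ->
  compact_set d (fun y => exists eta, converges d (u eta) y).
Proof.
  intros Hcomplete Hu I O HO Hcov. apply NNPP; intros Hbad.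
  destruct (infinite_branch (fun n e => ~ finitely_covered O (limits_from n e))
              (fun _ => true)) as [eta Heta].
  - intros [l Hl]. apply Hbad. exists l. intros y [e Hy]. apply Hl.
    exists e. split; [intros i Hi; lia | exact Hy].
  - intros n e Hn. apply NNPP; intros Hall. apply Hn.
    assert (Hcovered : forall b, finitely_covered O (limits_from (S n) (update e n b))).
    { intros b. apply NNPP; intros Hnot. apply Hall.
      exists (update e n b). split; [apply update_agree | exact Hnot]. }
    exact (finitely_covered_union O _ _ _ (limits_from_split n e)
             (Hcovered true) (Hcovered false)).
  - destruct (unif_cauchy_converges u Hcomplete Hu eta) as [y Hy].
    destruct (Hcov y (ex_intro _ eta Hy)) as [i Hi].
    destruct (HO i y Hi) as [r [Hr Hball]].
    destruct (unif_cauchy_unif_limit u Hu (r / 2)) as [N HN]; [lra|].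
    destruct (Heta N) as [e [Hag Hnot]]. apply Hnot.
    exists (i :: nil). intros z Hz. exists i. split; [left; reflexivity|]. apply Hball.
    pose proof (limits_from_close N (r / 2) e z HN Hz) as Hez.
    pose proof (HN eta N y (le_n N) Hy) as Hey.
    rewrite (prefix_determined N eta e Hag) in Hey.
    pose proof (md_tri _ Hm y (u e N) z). pose proof (md_sym _ Hm y (u e N)). lra.
Qed.

End CantorLimits.

End MetricSpace.

Lemma tau_length (k : nat) (eta : nat -> bool) : length (tau k eta) = k.
Proof. unfold tau. rewrite length_map, length_seq. reflexivity. Qed.

Lemma prefprod_nonneg (s : list bool -> R) :
  (forall w, (length w >= 1)%nat -> 0 <= s w) -> forall eta k, 0 <= prefprod s eta k.
Proof.
  intros Hs eta k. induction k as [|k IHk]; simpl; [lra|].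
  apply Rmult_le_pos; [exact IHk|]. apply Hs. rewrite tau_length; lia.
Qed.

Lemma tree_comp_lipschitz {X : Type} (d : X -> X -> R) (f : list bool -> X -> X)
  (s : list bool -> R) :
  (forall w, (length w >= 1)%nat -> lipschitz d (f w) (s w)) ->
  forall eta k y z, d (tree_comp f eta k y) (tree_comp f eta k z) <= prefprod s eta k * d y z.
Proof.
  intros Hlip eta k. induction k as [|k IHk]; intros y z; simpl; [lra|].
  eapply Rle_trans; [apply IHk|].
  destruct (Hlip (tau (S k) eta)) as [_ Hstep]; [rewrite tau_length; lia|].
  rewrite Rmult_assoc. apply Rmult_le_compat_l; [|exact (Hstep y z)].
  apply prefprod_nonneg. intros w Hw. exact (proj1 (Hlip w Hw)).
Qed.

Lemma tree_comp_agree {X : Type} (f : list bool -> X -> X) :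
  forall n e1 e2 y, agree n e1 e2 -> tree_comp f e1 n y = tree_comp f e2 n y.
Proof.
  induction n as [|n IHn]; intros e1 e2 y Hag; [reflexivity|]. simpl.
  assert (Htau : tau (S n) e1 = tau (S n) e2).
  { unfold tau. apply map_ext_in. intros i Hi. apply in_seq in Hi. apply Hag; lia. }
  rewrite Htau. apply IHn. intros i Hi; apply Hag; lia.
Qed.

Lemma tree_comp_step_bound {X : Type} (d : X -> X -> R) (f : list bool -> X -> X)
  (s : list bool -> R) (C : X -> Prop) (delta : nat -> R) (D : R) :
  is_metric d ->
  (forall w, (length w >= 1)%nat -> forall x, C x -> C (f w x)) ->
  (forall w, (length w >= 1)%nat -> lipschitz d (f w) (s w)) ->
  (forall eta k, (k >= 1)%nat -> prefprod s eta k <= delta k) ->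
  (forall a b, C a -> C b -> d a b <= D) ->
  forall x, C x -> forall eta k, (k >= 1)%nat ->
    d (tree_comp f eta (S k) x) (tree_comp f eta k x) <= D * delta k.
Proof.
  intros Hm Hinv Hlip Hdelta HD x Hx eta k Hk. simpl tree_comp.
  eapply Rle_trans; [apply (tree_comp_lipschitz d f s Hlip)|].
  assert (Hw : (length (tau (S k) eta) >= 1)%nat) by (rewrite tau_length; lia).
  rewrite Rmult_comm. apply Rmult_le_compat.
  - apply (md_nonneg _ Hm).
  - apply prefprod_nonneg. intros w Hw'. exact (proj1 (Hlip w Hw')).
  - exact (HD _ x (Hinv _ Hw x Hx) Hx).
  - exact (Hdelta eta k Hk).
Qed.

Theorem mainTheorem3 (X : Type) (d : X -> X -> R)
  (f : list bool -> X -> X) (s : list bool -> R) (C : X -> Prop) (delta : nat -> R) :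
  is_metric d ->
  complete_metric d ->
  compact_set d C -> (exists c, C c) ->
  (forall w, (length w >= 1)%nat -> continuous_map d (f w)) ->
  (forall w, (length w >= 1)%nat -> forall x, C x -> C (f w x)) ->
  (forall w, (length w >= 1)%nat -> lipschitz d (f w) (s w)) ->
  (exists l, Un_cv (fun n => sum_f_R0 (fun i => delta (S i)) n) l) ->
  (forall (eta : nat -> bool) (k : nat), (k >= 1)%nat -> prefprod s eta k <= delta k) ->
  forall x, C x ->
    (forall eta : nat -> bool, exists y, converges d (fun k => tree_comp f eta k x) y) /\
    let U := fun y => exists eta : nat -> bool, converges d (fun k => tree_comp f eta k x) y in
    compact_set d U /\ (exists u, U u) /\
    forall eps, eps > 0 -> exists N, forall k, (k >= N)%nat ->
      hausdorff d (fun y => exists eta : nat -> bool, y = tree_comp f eta k x) U < eps.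
Proof.
  intros Hm Hcomplete HC _ _ Hinv Hlip [l Hl] Hdelta x Hx.
  pose (u := fun eta k => tree_comp f eta k x).
  destruct (compact_bounded X d Hm C x HC Hx) as [D [HD0 HD]].
  assert (Hu : unif_cauchy X d u).
  { apply (summable_steps_unif_cauchy X d Hm u delta D HD0).
    - apply CV_Cauchy. exists l. exact Hl.
    - exact (tree_comp_step_bound d f s C delta D Hm Hinv Hlip Hdelta HD x Hx). }
  pose proof (unif_cauchy_converges X d u Hcomplete Hu) as Hconv.
  split; [exact Hconv|]. cbv zeta. split; [|split].
  - apply (limit_set_compact X d Hm u); [intros n e1 e2; apply tree_comp_agree | auto..].
  - destruct (Hconv (fun _ => true)) as [y Hy]. exists y, (fun _ => true). exact Hy.
  - intros eps Heps. destruct (unif_cauchy_unif_limit X d Hm u Hu (eps / 2)) as [N HN]; [lra|].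
    exists N. intros k Hk. apply Rle_lt_trans with (eps / 2); [|lra].
    apply (hausdorff_le_matching X d Hm); [lra| |].
    + intros a [eta ->]. destruct (Hconv eta) as [y Hy].
      exists y. split; [exists eta; exact Hy | left; exact (HN eta k y Hk Hy)].
    + intros b [eta Hb]. exists (u eta k).
      split; [exists eta; reflexivity | left; exact (HN eta k b Hk Hb)].
Qed.
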